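(* For every integer $t\ge 0$ there exists a finite-dimensional capable nilpotent Lie superalgebra $L$ with corank $t(L)=t$.
   Context: All algebras are over a field $\mathbb{F}$ of characteristic $\neq 2,3$. For a free presentation $0\to R\to F\to L\to 0$ ($F$ free Lie superalgebra, $R$ graded ideal), the Schur multiplier is $\mathcal{M}(L)=(R\cap F')/[R,F]$. For a nilpotent Lie superalgebra $L$ with $\dim L_{\bar0}=m$, $\dim L_{\bar1}=n$, the corank $t(L)\ge 0$ is defined by $\dim\mathcal{M}(L)=\frac12[(m+n)^2+(n-m)]-t(L)$, where $\dim\mathcal{M}(L)$ is the total dimension. A Lie superalgebra $L$ is capable if $L\cong H/Z(H)$ for some Lie superalgebra $H$. *)

From HB Require Import structures.
From mathcomp Require Import all_boot all_order all_algebra.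
Set Implicit Arguments. Unset Strict Implicit. Unset Printing Implicit Defensive.
Import GRing.Theory.
Local Open Scope ring_scope.

(* A Lie superalgebra over F is modelled on V0 (+) V1, i.e. on the product
   type V0 * V1 of two F-vector spaces: the even part is {(x,0)}, the odd
   part is {(0,y)}. *)

Definition homog (F : fieldType) (V0 V1 : lmodType F) (b : bool) (v : V0 * V1)
  : Prop := if b then v.1 = 0 else v.2 = 0.

Record LieSuper (F : fieldType) (V0 V1 : lmodType F) := {
  lbr : V0 * V1 -> V0 * V1 -> V0 * V1;
  lbr_linl : forall (a : F) (x y z : V0 * V1),
      lbr (a *: x + y) z = a *: lbr x z + lbr y z;
  lbr_linr : forall (a : F) (x y z : V0 * V1),
      lbr z (a *: x + y) = a *: lbr z x + lbr z y;
  lbr_graded : forall (a b : bool) (x y : V0 * V1),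
      homog a x -> homog b y -> homog (a (+) b) (lbr x y);
  lbr_anti : forall (a b : bool) (x y : V0 * V1),
      homog a x -> homog b y -> lbr x y = - (((-1) ^+ (a && b)) *: lbr y x);
  lbr_jacobi : forall (a b c : bool) (x y z : V0 * V1),
      homog a x -> homog b y -> homog c z ->
      ((-1) ^+ (a && c)) *: lbr x (lbr y z)
      + ((-1) ^+ (b && a)) *: lbr y (lbr z x)
      + ((-1) ^+ (c && b)) *: lbr z (lbr x y) = 0
}.

Arguments lbr {F V0 V1} l x y.

Definition even_hom (F : fieldType) (V0 V1 W0 W1 : lmodType F)
  (L : LieSuper V0 V1) (H : LieSuper W0 W1) (f : V0 * V1 -> W0 * W1) : Prop :=
  [/\ forall (a : F) x y, f (a *: x + y) = a *: f x + f y,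
      forall b x, homog b x -> homog b (f x)
    & forall x y, f (lbr L x y) = lbr H (f x) (f y)].

Definition brspan (F : fieldType) (V0 V1 : lmodType F) (L : LieSuper V0 V1)
  (P Q : V0 * V1 -> Prop) (x : V0 * V1) : Prop :=
  exists (k : nat) (a b : 'I_k -> V0 * V1),
    (forall i, P (a i) /\ Q (b i)) /\ x = \sum_(i < k) lbr L (a i) (b i).

(* dim (A / B) = d, for subspaces B <= A of an arbitrary F-vector space. *)
Definition qdim (F : fieldType) (V : lmodType F) (A B : V -> Prop) (d : nat)
  : Prop :=
  exists s : 'I_d -> V,
    [/\ forall i, A (s i),
        forall a, A a -> exists c : 'I_d -> F, B (a - \sum_(i < d) c i *: s i)
      & forall c : 'I_d -> F, B (\sum_(i < d) c i *: s i) -> forall i, c i = 0].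

Definition is_free (F : fieldType) (V0 V1 : lmodType F) (Fr : LieSuper V0 V1)
  (X0 X1 : Type) (i0 : X0 -> V0) (i1 : X1 -> V1) : Prop :=
  forall (W0 W1 : lmodType F) (H : LieSuper W0 W1) (g0 : X0 -> W0)
         (g1 : X1 -> W1),
    (exists f, [/\ even_hom Fr H f,
                   forall x, f (i0 x, 0) = (g0 x, 0)
                 & forall x, f (0, i1 x) = (0, g1 x)])
    /\ (forall f f', even_hom Fr H f -> even_hom Fr H f' ->
          (forall x, f (i0 x, 0) = f' (i0 x, 0)) ->
          (forall x, f (0, i1 x) = f' (0, i1 x)) ->
          forall v, f v = f' v).

(* dim M(L) = d, where M(L) = (R cap F')/[R,F] for a free presentation
   0 -> R -> Fr -> L -> 0 (R = ker pi). *)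
Definition schur_dim (F : fieldType) (V0 V1 : lmodType F) (L : LieSuper V0 V1)
  (d : nat) : Prop :=
  exists (X0 X1 : Type) (U0 U1 : lmodType F) (Fr : LieSuper U0 U1)
         (i0 : X0 -> U0) (i1 : X1 -> U1) (pi : U0 * U1 -> V0 * V1),
    [/\ is_free Fr i0 i1, even_hom Fr L pi, (forall v, exists u, pi u = v)
      & let R := fun u => pi u = 0 in
        qdim (fun u => R u /\ brspan Fr (fun _ => True) (fun _ => True) u)
             (brspan Fr R (fun _ => True)) d].

(* Corank: dim M(L) = 1/2 [(m+n)^2 + (n-m)] - t, m = dim L0, n = dim L1. *)
Definition has_corank (F : fieldType) (m n : nat)
  (L : LieSuper 'rV[F]_m 'rV[F]_n) (t : nat) : Prop :=
  exists d : nat, schur_dim L d /\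
    ((2 * d)%N%:Z = ((m + n) ^ 2)%N%:Z + (n%:Z - m%:Z) - (2 * t)%N%:Z)%R.

(* Lower central series L^1 = L, L^{k+1} = [L^k, L] (indexed from 0 here). *)
Fixpoint lcs (F : fieldType) (V0 V1 : lmodType F) (L : LieSuper V0 V1)
  (k : nat) : V0 * V1 -> Prop :=
  match k with
  | O => fun _ => True
  | S k' => brspan L (lcs L k') (fun _ => True)
  end.

Definition nilpotent (F : fieldType) (V0 V1 : lmodType F) (L : LieSuper V0 V1)
  : Prop := exists k, forall x, lcs L k x -> x = 0.

Definition center (F : fieldType) (V0 V1 : lmodType F) (H : LieSuper V0 V1)
  (z : V0 * V1) : Prop := forall h, lbr H z h = 0.

Definition capable (F : fieldType) (V0 V1 : lmodType F) (L : LieSuper V0 V1)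
  : Prop :=
  exists (W0 W1 : lmodType F) (H : LieSuper W0 W1) (phi : W0 * W1 -> V0 * V1),
    [/\ even_hom H L phi, (forall v, exists w, phi w = v)
      & forall z, phi z = 0 <-> center H z].

From HB Require Import structures.
From mathcomp Require Import all_boot all_order all_algebra.
From mathcomp Require Import ring zify.
From Stdlib Require Import ClassicalEpsilon FunctionalExtensionality PropExtensionality.
Import GRing.Theory.
Local Open Scope ring_scope.
Set Implicit Arguments. Unset Strict Implicit. Unset Printing Implicit Defensive.

(* For t = 0 take the zero algebra. For t = k + 1 take the purely even algebra
   L = H(1) (+) F^k of dimension k + 3, with [e_0, e_1] = z. It is nilpotent, and
   capable as the central quotient of an explicit class-3 algebra K. Presenting L
   by the free Lie algebra on g_0, ..., g_(k+1) with z = [g_0, g_1], the Jacobi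
   identity shows that R /\ F' is spanned modulo [R, F] by the [g_a, g_b],
   a < b, (a, b) <> (0, 1), and [g_0, z], [g_1, z]; these are independent since
   the lift F -> K kills [R, F] (R maps into Z(K)) and separates them. Hence
   dim M(L) = C(k+2, 2) + 1, i.e. t(L) = k + 1. *)

Lemma pair_ext (A B : Type) (p q : A * B) : p.1 = q.1 -> p.2 = q.2 -> p = q.
Proof. by case: p q => ? ? [? ?] /= -> ->. Qed.

Lemma selfopp_eq0 (F : fieldType) (V : lmodType F) (x : V) :
  (2 \notin [pchar F])%N -> x = - x -> x = 0.
Proof.
move=> h2 xN; have : (2%:R : F) *: x = 0 by rewrite scaler_nat mulr2n {2}xN addrN.
move/eqP; rewrite scaler_eq0 => /orP[/eqP two0 | /eqP //].
by move: h2; rewrite inE /= two0 eqxx.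
Qed.

Section Counting.
Local Open Scope nat_scope.

Lemma sum_ltn N j : j <= N -> \sum_(i < N) (i < j) = j.
Proof.
move=> le_jN; rewrite -(big_mkord xpredT (fun i => nat_of_bool (i < j))).
rewrite (big_cat_nat _ (n := j)) //=.
rewrite (eq_big_nat _ _ (F2 := fun _ => 1)); last by move=> i /andP[_ ->].
rewrite (eq_big_nat _ _ (F1 := fun i => nat_of_bool (i < j)) (F2 := fun _ => 0)); last first.
  by move=> i /andP[le_ji _]; rewrite ltnNge le_ji.
by rewrite !sum_nat_const_nat muln1 muln0 addn0 subn0.
Qed.

Lemma card_ltn_pairs N : #|[pred q : 'I_N * 'I_N | q.1 < q.2]| = 'C(N, 2).
Proof.
rewrite -sum1_card big_mkcond /= -(pair_bigA _ (fun i j : 'I_N => if i < j then 1 else 0)) /=.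
rewrite exchange_big /= -bin2_sum big_mkord; apply: eq_bigr => j _.
by rewrite -[in RHS](@sum_ltn N j (ltnW (ltn_ord j))); apply: eq_bigr => i _; case: ltnP.
Qed.

Lemma bin2_double n : ('C(n, 2)).*2 = n * n.-1.
Proof. by rewrite bin2 even_halfK //; case: n => //= n; rewrite oddM /= andNb. Qed.

End Counting.

Section Bracket.
Variables (F : fieldType) (V0 V1 : lmodType F) (L : LieSuper V0 V1).

Lemma lbr0l z : lbr L 0 z = 0.
Proof. by have := lbr_linl L (-1) 0 0 z; rewrite scaler0 addr0 scaleN1r addNr. Qed.

Lemma lbr0r z : lbr L z 0 = 0.
Proof. by have := lbr_linr L (-1) 0 0 z; rewrite scaler0 addr0 scaleN1r addNr. Qed.

Lemma lbrDl x y z : lbr L (x + y) z = lbr L x z + lbr L y z.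
Proof. by have := lbr_linl L 1 x y z; rewrite !scale1r. Qed.

Lemma lbrDr x y z : lbr L z (x + y) = lbr L z x + lbr L z y.
Proof. by have := lbr_linr L 1 x y z; rewrite !scale1r. Qed.

Lemma lbrZl a x z : lbr L (a *: x) z = a *: lbr L x z.
Proof. by have := lbr_linl L a x 0 z; rewrite addr0 lbr0l addr0. Qed.

Lemma lbrZr a x z : lbr L z (a *: x) = a *: lbr L z x.
Proof. by have := lbr_linr L a x 0 z; rewrite addr0 lbr0r addr0. Qed.

Lemma lbr_suml (I : Type) (r : seq I) (P : pred I) (f : I -> V0 * V1) z :
  lbr L (\sum_(i <- r | P i) f i) z = \sum_(i <- r | P i) lbr L (f i) z.
Proof. exact: (big_morph (lbr L^~ z) (fun x y => lbrDl x y z) (lbr0l z)). Qed.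

Lemma lbr_sumr (I : Type) (r : seq I) (P : pred I) (f : I -> V0 * V1) z :
  lbr L z (\sum_(i <- r | P i) f i) = \sum_(i <- r | P i) lbr L z (f i).
Proof. exact: (big_morph (lbr L z) (fun x y => lbrDr x y z) (lbr0r z)). Qed.

Lemma lbr_anti_even x y : x.2 = 0 -> y.2 = 0 -> lbr L x y = - lbr L y x.
Proof. by move=> x0 y0; rewrite (@lbr_anti _ _ _ L false false x y) // expr0 scale1r. Qed.

Lemma lbr_jacobi_even x y z : x.2 = 0 -> y.2 = 0 -> z.2 = 0 ->
  lbr L x (lbr L y z) + lbr L y (lbr L z x) + lbr L z (lbr L x y) = 0.
Proof.
move=> x0 y0 z0; have := @lbr_jacobi _ _ _ L false false false x y z x0 y0 z0.
by rewrite !expr0 !scale1r.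
Qed.

Lemma lbr_self_even x : (2 \notin [pchar F])%N -> x.2 = 0 -> lbr L x x = 0.
Proof. by move=> h2 x0; apply: selfopp_eq0 => //; rewrite {1}lbr_anti_even. Qed.

End Bracket.

Section EvenHom.
Variables (F : fieldType) (V0 V1 W0 W1 : lmodType F).
Variables (L : LieSuper V0 V1) (H : LieSuper W0 W1) (f : V0 * V1 -> W0 * W1).
Hypothesis f_hom : even_hom L H f.

Lemma even_hom0 : f 0 = 0.
Proof.
by case: f_hom => lin _ _; have := lin (-1) 0 0; rewrite scaler0 addr0 scaleN1r addNr.
Qed.

Lemma even_homD x y : f (x + y) = f x + f y.
Proof. by case: f_hom => lin _ _; have := lin 1 x y; rewrite !scale1r. Qed.

Lemma even_homZ a x : f (a *: x) = a *: f x.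
Proof. by case: f_hom => lin _ _; have := lin a x 0; rewrite addr0 even_hom0 addr0. Qed.

Lemma even_homB x y : f (x - y) = f x - f y.
Proof. by rewrite even_homD -scaleN1r even_homZ scaleN1r. Qed.

Lemma even_hom_sum (I : Type) (r : seq I) (P : pred I) (g : I -> V0 * V1) :
  f (\sum_(i <- r | P i) g i) = \sum_(i <- r | P i) f (g i).
Proof. exact: (big_morph f even_homD even_hom0). Qed.

Lemma even_hom_br x y : f (lbr L x y) = lbr H (f x) (f y).
Proof. by case: f_hom. Qed.

End EvenHom.

Lemma even_hom_comp (F : fieldType) (V0 V1 W0 W1 U0 U1 : lmodType F)
    (L : LieSuper V0 V1) (H : LieSuper W0 W1) (K : LieSuper U0 U1) f g :
  even_hom L H f -> even_hom H K g -> even_hom L K (g \o f).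
Proof.
move=> f_hom g_hom; split=> [a x y | b x xb | x y] /=.
- by rewrite (even_homD f_hom) (even_homZ f_hom) (even_homD g_hom) (even_homZ g_hom).
- by case: g_hom => _ + _; apply; case: f_hom => _ + _; apply.
- by rewrite (even_hom_br f_hom) (even_hom_br g_hom).
Qed.

Section Subspace.
Variables (F : fieldType) (V : lmodType F).

Definition subspace (S : V -> Prop) : Prop :=
  S 0 /\ forall a x y, S x -> S y -> S (a *: x + y).

Definition addsp (S T : V -> Prop) (x : V) : Prop :=
  exists s t, [/\ S s, T t & x = s + t].

Definition line (z x : V) : Prop := exists c, x = c *: z.

Definition in_span (I : finType) (s : I -> V) (x : V) : Prop :=
  exists c : I -> F, x = \sum_i c i *: s i.

Section Closure.
Variables (S : V -> Prop) (S_sub : subspace S).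

Lemma subspace0 : S 0. Proof. by case: S_sub. Qed.

Lemma subspaceD x y : S x -> S y -> S (x + y).
Proof. by case: S_sub => _ lin Sx Sy; have := lin 1 x y Sx Sy; rewrite scale1r. Qed.

Lemma subspaceZ a x : S x -> S (a *: x).
Proof. by case: S_sub => S0 lin Sx; have := lin a x 0 Sx S0; rewrite addr0. Qed.

Lemma subspaceN x : S x -> S (- x).
Proof. by rewrite -scaleN1r; apply: subspaceZ. Qed.

Lemma subspace_sum (I : Type) (r : seq I) (P : pred I) (f : I -> V) :
  (forall i, P i -> S (f i)) -> S (\sum_(i <- r | P i) f i).
Proof. by move=> Sf; apply: big_ind => //; [exact: subspace0 | exact: subspaceD]. Qed.

End Closure.

Lemma addsp_subspace S T : subspace S -> subspace T -> subspace (addsp S T).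
Proof.
move=> S_sub T_sub; split; first by exists 0, 0; rewrite addr0; split=> //; exact: subspace0.
move=> a _ _ [s [t [Ss Tt ->]]] [s' [t' [Ss' Tt' ->]]].
exists (a *: s + s'), (a *: t + t'); split; first 1 [exact: S_sub.2 | exact: T_sub.2].
by rewrite scalerDr addrACA.
Qed.

Lemma addspl S T x : subspace T -> S x -> addsp S T x.
Proof. by move=> T_sub Sx; exists x, 0; rewrite addr0; split=> //; exact: subspace0. Qed.

Lemma addspr S T x : subspace S -> T x -> addsp S T x.
Proof. by move=> S_sub Tx; exists 0, x; rewrite add0r; split=> //; exact: subspace0. Qed.

Lemma line_subspace z : subspace (line z).
Proof.
split; first by exists 0; rewrite scale0r.
by move=> a _ _ [c ->] [c' ->]; exists (a * c + c'); rewrite scalerDl scalerA.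
Qed.

Lemma in_span_subspace (I : finType) (s : I -> V) : subspace (in_span s).
Proof.
split; first by exists (fun=> 0); rewrite big1 // => i _; rewrite scale0r.
move=> a _ _ [c ->] [c' ->]; exists (fun i => a * c i + c' i).
rewrite scaler_sumr -big_split; apply: eq_bigr => i _.
by rewrite scalerDl scalerA.
Qed.

Lemma in_span_gen (I : finType) (s : I -> V) i : in_span s (s i).
Proof.
exists (fun j => (j == i)%:R); rewrite (bigD1 i) //= eqxx scale1r big1 ?addr0 //.
by move=> j /negbTE ->; rewrite scale0r.
Qed.

Lemma qdim_basis (A B : V -> Prop) (I : finType) (s : I -> V) :
  (forall i, A (s i)) ->
  (forall a, A a -> exists c : I -> F, B (a - \sum_i c i *: s i)) ->
  (forall c : I -> F, B (\sum_i c i *: s i) -> forall i, c i = 0) ->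
  qdim A B #|I|.
Proof.
move=> As s_span s_free.
have reindex (c : I -> F) : \sum_i c i *: s i
    = \sum_(j < #|I|) c (enum_val j) *: s (enum_val j).
  by rewrite -(big_enum_val (fun i => c i *: s i)); apply: eq_bigl => i; rewrite inE.
exists (fun j => s (enum_val j)); split=> [j | a /s_span [c Bc] | c Bc j].
- exact: As.
- by exists (fun j => c (enum_val j)); rewrite -reindex.
have := s_free (fun i => c (enum_rank i)) _ (enum_val j); rewrite enum_valK; apply.
by rewrite reindex; under eq_bigr => i _ do rewrite enum_valK.
Qed.

End Subspace.

Section BracketSpan.
Variables (F : fieldType) (V0 V1 : lmodType F) (L : LieSuper V0 V1).
Variables (P Q : V0 * V1 -> Prop).

Lemma brspan_br a b : P a -> Q b -> brspan L P Q (lbr L a b).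
Proof. by move=> Pa Qb; exists 1, (fun=> a), (fun=> b); rewrite big_ord1. Qed.

Lemma brspan_subspace : (forall a x, P x -> P (a *: x)) -> subspace (brspan L P Q).
Proof.
move=> PZ; split; first by exists 0, (fun=> 0), (fun=> 0); split; [case | rewrite big_ord0].
move=> c _ _ [m [a [b [PQab ->]]]] [m' [a' [b' [PQab' ->]]]].
exists (m + m'), (fun i => match split i with inl j => c *: a j | inr j => a' j end),
  (fun i => match split i with inl j => b j | inr j => b' j end); split.
  move=> i; case: (split i) => [j | j]; last exact: PQab'.
  by case: (PQab j) => Pa Qb; split=> //; apply: PZ.
rewrite big_split_ord scaler_sumr; congr (_ + _); apply: eq_bigr => i _.
  by rewrite -[lshift _ _]/(unsplit (inl i)) unsplitK lbrZl.
by rewrite -[rshift _ _]/(unsplit (inr i)) unsplitK.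
Qed.

End BracketSpan.

Arguments brspan_subspace {F V0 V1 L P Q}.

Lemma even_hom_ker_subspace (F : fieldType) (V0 V1 W0 W1 : lmodType F)
    (L : LieSuper V0 V1) (H : LieSuper W0 W1) f :
  even_hom L H f -> subspace (fun x => f x = 0).
Proof.
move=> f_hom; split; first exact: (even_hom0 f_hom).
by move=> a x y fx fy; case: f_hom => lin _ _; rewrite lin fx fy scaler0 addr0.
Qed.

Section EvenLie.
Variables (F : fieldType) (V : lmodType F) (br : V -> V -> V).
Hypotheses (br_linl : forall a x y z, br (a *: x + y) z = a *: br x z + br y z)
  (br_anti : forall x y, br x y = - br y x)
  (br_jacobi : forall x y z, br x (br y z) + br y (br z x) + br z (br x y) = 0).

Let br0l z : br 0 z = 0.
Proof. by have := br_linl (-1) 0 0 z; rewrite scaler0 addr0 scaleN1r addNr. Qed.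

Let br0r z : br z 0 = 0.
Proof. by rewrite br_anti br0l oppr0. Qed.

Let ebr (x y : V * 'rV[F]_0) : V * 'rV[F]_0 := (br x.1 y.1, 0).

Let ebr_linl a (x y z : V * 'rV[F]_0) : ebr (a *: x + y) z = a *: ebr x z + ebr y z.
Proof. by apply: pair_ext; rewrite /= ?br_linl // scaler0 addr0. Qed.

Let ebr_linr a (x y z : V * 'rV[F]_0) : ebr z (a *: x + y) = a *: ebr z x + ebr z y.
Proof.
apply: pair_ext; rewrite /= ?scaler0 ?addr0 //.
by rewrite br_anti br_linl (br_anti x.1) (br_anti y.1) opprD scalerN !opprK.
Qed.

Let ebr_graded (a b : bool) (x y : V * 'rV[F]_0) :
  homog a x -> homog b y -> homog (a (+) b) (ebr x y).
Proof. by case: a b => [] [] /= hx hy //; rewrite ?hx ?hy ?br0l ?br0r. Qed.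

Let ebr_anti (a b : bool) (x y : V * 'rV[F]_0) :
  homog a x -> homog b y -> ebr x y = - (((-1) ^+ (a && b)) *: ebr y x).
Proof.
move=> hx hy; apply: pair_ext; rewrite /= ?scaler0 ?oppr0 //.
case: a b hx hy => [] [] /= hx hy; rewrite ?hx ?hy ?br0l ?br0r ?scaler0 ?oppr0 //.
by rewrite expr0 scale1r -br_anti.
Qed.

Let ebr_jacobi (a b c : bool) (x y z : V * 'rV[F]_0) :
  homog a x -> homog b y -> homog c z ->
  ((-1) ^+ (a && c)) *: ebr x (ebr y z) + ((-1) ^+ (b && a)) *: ebr y (ebr z x)
  + ((-1) ^+ (c && b)) *: ebr z (ebr x y) = 0.
Proof.
move=> hx hy hz; apply: pair_ext; rewrite /= ?scaler0 ?addr0 //.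
case: a b c hx hy hz => [] [] [] /= hx hy hz;
  rewrite ?hx ?hy ?hz ?br0l ?br0r ?scaler0 ?addr0 ?add0r //.
by rewrite !expr0 !scale1r.
Qed.

Definition EvenLie : LieSuper V 'rV[F]_0 :=
  Build_LieSuper ebr_linl ebr_linr ebr_graded ebr_anti ebr_jacobi.

End EvenLie.

Section FreeLie.
Variables (F : fieldType) (n : nat).

Inductive fexpr := FGen of 'I_n | FZero | FAdd of fexpr & fexpr | FOpp of fexpr
  | FScale of F & fexpr | FBr of fexpr & fexpr.

Fixpoint fexpr_enc (e : fexpr) : GenTree.tree (F + 'I_n) :=
  match e with
  | FGen i => GenTree.Leaf (inr i)
  | FZero => GenTree.Node 0 [::]
  | FAdd a b => GenTree.Node 1 [:: fexpr_enc a; fexpr_enc b]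
  | FOpp a => GenTree.Node 2 [:: fexpr_enc a]
  | FScale c a => GenTree.Node 3 [:: GenTree.Leaf (inl c); fexpr_enc a]
  | FBr a b => GenTree.Node 4 [:: fexpr_enc a; fexpr_enc b]
  end.

Fixpoint fexpr_dec (t : GenTree.tree (F + 'I_n)) : option fexpr :=
  match t with
  | GenTree.Leaf (inr i) => Some (FGen i)
  | GenTree.Node 0 [::] => Some FZero
  | GenTree.Node 1 [:: a; b] =>
      if (fexpr_dec a, fexpr_dec b) is (Some a, Some b) then Some (FAdd a b) else None
  | GenTree.Node 2 [:: a] => omap FOpp (fexpr_dec a)
  | GenTree.Node 3 [:: GenTree.Leaf (inl c); a] => omap (FScale c) (fexpr_dec a)
  | GenTree.Node 4 [:: a; b] =>
      if (fexpr_dec a, fexpr_dec b) is (Some a, Some b) then Some (FBr a b) else None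
  | _ => None
  end.

Lemma fexpr_encK : pcancel fexpr_enc fexpr_dec.
Proof. by elim=> //= [a -> b -> | a -> | c a -> | a -> b ->]. Qed.

HB.instance Definition _ := Choice.copy fexpr (pcan_type fexpr_encK).

Fixpoint fexpr_eval (W0 W1 : lmodType F) (H : LieSuper W0 W1) (g : 'I_n -> W0)
    (e : fexpr) : W0 * W1 :=
  match e with
  | FGen i => (g i, 0)
  | FZero => 0
  | FAdd a b => fexpr_eval H g a + fexpr_eval H g b
  | FOpp a => - fexpr_eval H g a
  | FScale c a => c *: fexpr_eval H g a
  | FBr a b => lbr H (fexpr_eval H g a) (fexpr_eval H g b)
  end.

Lemma fexpr_eval_even (W0 W1 : lmodType F) (H : LieSuper W0 W1) g e :
  (fexpr_eval H g e).2 = 0.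
Proof.
elim: e => //= [a -> b -> | a -> | c a -> | a ha b hb]; rewrite ?addr0 ?oppr0 ?scaler0 //.
exact: (@lbr_graded _ _ _ H false false _ _ ha hb).
Qed.

(* The free Lie algebra on n even generators: expressions modulo the identities
   valid in every Lie superalgebra, each class represented by a chosen element. *)
Definition fequiv (e1 e2 : fexpr) : Prop :=
  forall (W0 W1 : lmodType F) (H : LieSuper W0 W1) g, fexpr_eval H g e1 = fexpr_eval H g e2.

Definition fcanon (e : fexpr) : fexpr := epsilon (inhabits FZero) (fequiv^~ e).

Lemma fcanon_equiv e : fequiv (fcanon e) e.
Proof. by apply: (epsilon_spec (inhabits FZero) (fequiv^~ e)); exists e. Qed.

Lemma fcanon_eq e1 e2 : fequiv e1 e2 -> fcanon e1 = fcanon e2.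
Proof.
move=> e12; rewrite /fcanon; congr epsilon.
apply: functional_extensionality => e; apply: propositional_extensionality.
by split=> eq_e W0 W1 H g; rewrite eq_e e12.
Qed.

Lemma fcanon_id e : fcanon (fcanon e) == fcanon e.
Proof. exact/eqP/fcanon_eq/fcanon_equiv. Qed.

Definition free_lie := {e : fexpr | fcanon e == e}.
HB.instance Definition _ := Choice.on free_lie.

Definition fclass (e : fexpr) : free_lie := exist _ (fcanon e) (fcanon_id e).

Lemma fclass_eval (W0 W1 : lmodType F) (H : LieSuper W0 W1) g e :
  fexpr_eval H g (val (fclass e)) = fexpr_eval H g e.
Proof. exact: fcanon_equiv. Qed.

Lemma free_lie_eq (u v : free_lie) : fequiv (val u) (val v) -> u = v.
Proof.
by move=> uv; apply: val_inj; rewrite -(eqP (valP u)) -(eqP (valP v)); apply: fcanon_eq.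
Qed.

Lemma fclassK (u : free_lie) : fclass (val u) = u.
Proof. by apply: free_lie_eq => W0 W1 H g; rewrite fclass_eval. Qed.

Definition free_add (u v : free_lie) := fclass (FAdd (val u) (val v)).
Definition free_opp (u : free_lie) := fclass (FOpp (val u)).
Definition free_scale (a : F) (u : free_lie) := fclass (FScale a (val u)).
Definition free_br (u v : free_lie) := fclass (FBr (val u) (val v)).

Lemma free_addA : associative free_add.
Proof.
by move=> x y z; apply: free_lie_eq => W0 W1 H g; rewrite !fclass_eval /= !fclass_eval addrA.
Qed.

Lemma free_addC : commutative free_add.
Proof. by move=> x y; apply: free_lie_eq => W0 W1 H g; rewrite !fclass_eval /= addrC. Qed.

Lemma free_add0 : left_id (fclass FZero) free_add.
Proof.
by move=> x; apply: free_lie_eq => W0 W1 H g; rewrite !fclass_eval /= fclass_eval add0r.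
Qed.

Lemma free_addN : left_inverse (fclass FZero) free_opp free_add.
Proof.
by move=> x; apply: free_lie_eq => W0 W1 H g; rewrite !fclass_eval /= fclass_eval addNr.
Qed.

HB.instance Definition _ :=
  GRing.isZmodule.Build free_lie free_addA free_addC free_add0 free_addN.

Lemma free_scaleA a b v : free_scale a (free_scale b v) = free_scale (a * b) v.
Proof. by apply: free_lie_eq => W0 W1 H g; rewrite !fclass_eval /= fclass_eval scalerA. Qed.

Lemma free_scale1 : left_id 1 free_scale.
Proof. by move=> v; apply: free_lie_eq => W0 W1 H g; rewrite !fclass_eval /= scale1r. Qed.

Lemma free_scaleDr : right_distributive free_scale +%R.
Proof.
move=> a u v; apply: free_lie_eq => W0 W1 H g.
by rewrite !fclass_eval /= !fclass_eval /= scalerDr.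
Qed.

Lemma free_scaleDl v : {morph free_scale^~ v : a b / a + b}.
Proof.
move=> a b; apply: free_lie_eq => W0 W1 H g.
by rewrite !fclass_eval /= !fclass_eval /= scalerDl.
Qed.

HB.instance Definition _ := GRing.Zmodule_isLmodule.Build F free_lie
  free_scaleA free_scale1 free_scaleDr free_scaleDl.

Section Eval.
Variables (W0 W1 : lmodType F) (H : LieSuper W0 W1) (g : 'I_n -> W0).
Local Notation evalH u := (fexpr_eval H g (val u)).

Lemma eval_add (u v : free_lie) : evalH (u + v) = evalH u + evalH v.
Proof. exact: fclass_eval. Qed.

Lemma eval_scale a (u : free_lie) : evalH (a *: u) = a *: evalH u.
Proof. exact: fclass_eval. Qed.

Lemma eval_br (u v : free_lie) : evalH (free_br u v) = lbr H (evalH u) (evalH v).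
Proof. exact: fclass_eval. Qed.

End Eval.

Lemma free_br_linl a x y z :
  free_br (a *: x + y) z = a *: free_br x z + free_br y z.
Proof.
by apply: free_lie_eq => W0 W1 H g; rewrite !(eval_br, eval_add, eval_scale) lbrDl lbrZl.
Qed.

Lemma free_br_anti x y : free_br x y = - free_br y x.
Proof.
apply: free_lie_eq => W0 W1 H g; rewrite !eval_br fclass_eval /= eval_br.
exact/lbr_anti_even/fexpr_eval_even/fexpr_eval_even.
Qed.

Lemma free_br_jacobi x y z :
  free_br x (free_br y z) + free_br y (free_br z x) + free_br z (free_br x y) = 0.
Proof.
apply: free_lie_eq => W0 W1 H g; rewrite !(eval_br, eval_add) fclass_eval /=.
exact/lbr_jacobi_even/fexpr_eval_even/fexpr_eval_even/fexpr_eval_even.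
Qed.

Definition FreeLie := EvenLie free_br_linl free_br_anti free_br_jacobi.

Definition free_gen (i : 'I_n) : free_lie := fclass (FGen i).

Definition no_gen (v : void) : 'rV[F]_0 := match v with end.

Lemma fclass_add a b : fclass (FAdd a b) = fclass a + fclass b.
Proof. by apply: free_lie_eq => W0 W1 H g; rewrite eval_add !fclass_eval. Qed.

Lemma fclass_scale c a : fclass (FScale c a) = c *: fclass a.
Proof. by apply: free_lie_eq => W0 W1 H g; rewrite eval_scale !fclass_eval. Qed.

Lemma fclass_opp a : fclass (FOpp a) = - fclass a.
Proof.
rewrite -scaleN1r -fclass_scale; apply: free_lie_eq => W0 W1 H g.
by rewrite !fclass_eval /= scaleN1r.
Qed.

Lemma fclass_br a b : fclass (FBr a b) = free_br (fclass a) (fclass b).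
Proof. by apply: free_lie_eq => W0 W1 H g; rewrite eval_br !fclass_eval. Qed.

Lemma FreeLie_ind (P : free_lie * 'rV[F]_0 -> Prop) :
  (forall i, P (free_gen i, 0)) -> subspace P ->
  (forall u v, P u -> P v -> P (lbr FreeLie u v)) -> forall u, P u.
Proof.
move=> P_gen P_sub P_br [u w]; rewrite (thinmx0 w) -(fclassK u).
elim: (val u) => [i | | a Pa b Pb | a Pa | c a Pa | a Pa b Pb].
- exact: P_gen.
- exact: (subspace0 P_sub).
- have -> : (fclass (FAdd a b), 0) = (fclass a, 0) + (fclass b, 0) :> free_lie * 'rV[F]_0.
    by apply: pair_ext; rewrite /= ?addr0 // fclass_add.
  exact: subspaceD.
- have -> : (fclass (FOpp a), 0) = - (fclass a, 0) :> free_lie * 'rV[F]_0.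
    by apply: pair_ext; rewrite /= ?oppr0 // fclass_opp.
  exact: subspaceN.
- have -> : (fclass (FScale c a), 0) = c *: (fclass a, 0) :> free_lie * 'rV[F]_0.
    by apply: pair_ext; rewrite /= ?scaler0 // fclass_scale.
  exact: subspaceZ.
- by rewrite fclass_br; apply: (P_br _ _ Pa Pb).
Qed.

Definition free_lift (W0 W1 : lmodType F) (H : LieSuper W0 W1) (g : 'I_n -> W0)
  (v : free_lie * 'rV[F]_0) : W0 * W1 := fexpr_eval H g (val v.1).

Lemma free_lift_hom (W0 W1 : lmodType F) (H : LieSuper W0 W1) g :
  even_hom FreeLie H (free_lift H g).
Proof.
split=> [a x y | [] x x_b | x y]; rewrite /free_lift.
- by rewrite -[(_ + _).1]/(a *: x.1 + y.1) eval_add eval_scale.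
- by rewrite x_b fclass_eval.
- exact: fexpr_eval_even.
- by rewrite eval_br.
Qed.

Lemma free_lift_gen (W0 W1 : lmodType F) (H : LieSuper W0 W1) g i :
  free_lift H g (free_gen i, 0) = (g i, 0).
Proof. by rewrite /free_lift fclass_eval. Qed.

Lemma FreeLie_free : is_free FreeLie free_gen no_gen.
Proof.
move=> W0 W1 H g0 g1; split.
  by exists (free_lift H g0); split=> [|i|[]]; [exact: free_lift_hom | exact: free_lift_gen].
move=> f f' f_hom f'_hom f_gen _; apply: FreeLie_ind => [i | | u v fu fv].
- exact: f_gen.
- split=> [|a x y fx fy]; first by rewrite (even_hom0 f_hom) (even_hom0 f'_hom).
  by rewrite (even_homD f_hom) (even_homD f'_hom) (even_homZ f_hom) (even_homZ f'_hom) fx fy.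
- by rewrite (even_hom_br f_hom) (even_hom_br f'_hom) fu fv.
Qed.

End FreeLie.

Section HeisenbergAbelian.
Variables (F : fieldType) (k : nat).
Local Notation N := k.+2.
Local Notation M := k.+3.

(* The basis of F^M is e_(wd i), i < N, together with the central e_(ord_max). *)
Definition i0 : 'I_N := ord0.
Definition i1 : 'I_N := @Ordinal N 1 (erefl true).
Definition wd (i : 'I_N) : 'I_M := widen_ord (leqnSn _) i.

Lemma wd_eq (a b : 'I_N) : (wd a == wd b) = (a == b).
Proof. by rewrite -val_eqE [RHS]eq_sym -val_eqE /= eq_sym. Qed.

Lemma wd_max i : (wd i == ord_max) = false.
Proof. by apply/negbTE; rewrite -val_eqE /= neq_ltn ltn_ord. Qed.

Lemma wdK i : inord (wd i) = i :> 'I_N.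
Proof. by apply: val_inj; rewrite /= inordK. Qed.

Lemma wd_inord (j : 'I_M) : j != ord_max -> wd (inord j) = j.
Proof.
move=> j_max; apply: val_inj; rewrite /= inordK //.
by rewrite ltn_neqAle -ltnS ltn_ord andbT; apply: contra j_max => /eqP j_eq; apply/eqP/val_inj.
Qed.

Definition heis_z : 'rV[F]_M := delta_mx 0 ord_max.

Definition heis_form (u v : 'rV[F]_M) : F :=
  u 0 (wd i0) * v 0 (wd i1) - u 0 (wd i1) * v 0 (wd i0).

Definition heis_br (u v : 'rV[F]_M) : 'rV[F]_M := heis_form u v *: heis_z.

Lemma heis_br_linl a x y z : heis_br (a *: x + y) z = a *: heis_br x z + heis_br y z.
Proof. by rewrite /heis_br /heis_form scalerA -scalerDl !mxE; congr (_ *: _); ring. Qed.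

Lemma heis_br_anti x y : heis_br x y = - heis_br y x.
Proof. by rewrite /heis_br /heis_form -scaleNr; congr (_ *: _); ring. Qed.

Lemma heis_br_z x c : heis_br x (c *: heis_z) = 0.
Proof. by rewrite /heis_br /heis_form !mxE !wd_max !andbF !mulr0 subrr scale0r. Qed.

Lemma heis_br_jacobi x y z :
  heis_br x (heis_br y z) + heis_br y (heis_br z x) + heis_br z (heis_br x y) = 0.
Proof. by rewrite {2 4 6}/heis_br !heis_br_z !addr0. Qed.

(* The direct sum of the Heisenberg algebra on e_(wd i0), e_(wd i1), e_(ord_max)
   and an abelian algebra of dimension k. *)
Definition HeisAb : LieSuper 'rV[F]_M 'rV[F]_0 :=
  EvenLie heis_br_linl heis_br_anti heis_br_jacobi.

Lemma HeisAb_derived y :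
  brspan HeisAb (fun _ => True) (fun _ => True) y -> exists c, y = (c *: heis_z, 0).
Proof.
move=> [m [a [b [_ ->]]]]; apply: (big_ind (fun y => exists c, y = (c *: heis_z, 0))).
- by exists 0; rewrite scale0r.
- by move=> _ _ [c ->] [c' ->]; exists (c + c'); apply: pair_ext; rewrite /= ?scalerDl ?addr0.
- by move=> i _; exists (heis_form (a i).1 (b i).1).
Qed.

Lemma HeisAb_nilpotent : nilpotent HeisAb.
Proof.
exists 2 => _ [m [a [b [ab ->]]]]; apply: big1 => i _.
have [/HeisAb_derived [c ->] _] := ab i.
by apply: pair_ext; rewrite //= heis_br_anti heis_br_z oppr0.
Qed.

Definition cover_space := (('rV[F]_N * 'M[F]_N) * 'rV[F]_N)%type.

Definition wedge (x x' : 'rV[F]_N) : 'M[F]_N :=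
  \matrix_(i, j) (x 0 i * x' 0 j - x' 0 i * x 0 j).

Definition rho (x : 'rV[F]_N) (w : 'M[F]_N) : 'rV[F]_N :=
  \row_l (w i0 i1 * (x 0 i0 * (l == i0)%:R + x 0 i1 * (l == i1)%:R)).

(* [x + w + v, x' + w' + v'] = x /\ x' + (rho x w' - rho x' w) with v central;
   the centre is {x = 0, w_01 = 0}, and the quotient by it is HeisAb. *)
Definition cover_br (a b : cover_space) : cover_space :=
  ((0, wedge a.1.1 b.1.1), rho a.1.1 b.1.2 - rho b.1.1 a.1.2).

Lemma cover_br_linl c x y z :
  cover_br (c *: x + y) z = c *: cover_br x z + cover_br y z.
Proof.
apply: pair_ext; first apply: pair_ext.
- by rewrite /= scaler0 addr0.
- by apply/matrixP => i j; rewrite /= !mxE; ring.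
- by apply/rowP => l; rewrite /= !mxE; ring.
Qed.

Lemma cover_br_anti x y : cover_br x y = - cover_br y x.
Proof.
apply: pair_ext; first apply: pair_ext.
- by rewrite /= oppr0.
- by apply/matrixP => i j; rewrite /= !mxE; ring.
- by apply/rowP => l; rewrite /= !mxE; ring.
Qed.

Lemma cover_br_jacobi x y z :
  cover_br x (cover_br y z) + cover_br y (cover_br z x) + cover_br z (cover_br x y) = 0.
Proof.
apply: pair_ext; first apply: pair_ext.
- by rewrite /= !addr0.
- by apply/matrixP => i j; rewrite /= !mxE; ring.
- by apply/rowP => l; rewrite /= !mxE; ring.
Qed.

Definition HeisCover : LieSuper cover_space 'rV[F]_0 :=
  EvenLie cover_br_linl cover_br_anti cover_br_jacobi.

Definition cover_proj_row (a : cover_space) : 'rV[F]_M :=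
  \row_j (if j == ord_max then a.1.2 i0 i1 else a.1.1 0 (inord j)).

Definition cover_proj (v : cover_space * 'rV[F]_0) : 'rV[F]_M * 'rV[F]_0 :=
  (cover_proj_row v.1, 0).

Lemma cover_proj_row_wd a i : cover_proj_row a 0 (wd i) = a.1.1 0 i.
Proof. by rewrite /cover_proj_row mxE wd_max wdK. Qed.

Lemma cover_proj_row_max a : cover_proj_row a 0 ord_max = a.1.2 i0 i1.
Proof. by rewrite /cover_proj_row mxE eqxx. Qed.

Lemma cover_proj_hom : even_hom HeisCover HeisAb cover_proj.
Proof.
split=> [a x y | [] x /= x_b // | x y].
- apply: pair_ext; rewrite /= ?scaler0 ?addr0 //.
  by apply/rowP => j; rewrite !mxE; case: ifP.
- by rewrite x_b; apply/rowP => j; rewrite !mxE; case: ifP.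
- apply: pair_ext => //=; apply/rowP => j.
  rewrite /heis_br /heis_form !cover_proj_row_wd /heis_z !mxE /=.
  by case: ifP => _; rewrite /= ?mulr0 ?mulr1 //; ring.
Qed.

Lemma cover_proj_surj v : exists w, cover_proj w = v.
Proof.
case: v => u w; rewrite (thinmx0 w).
pose w01 := \matrix_(i, j) (((i == i0) && (j == i1))%:R * u 0 ord_max : F).
exists (((\row_i u 0 (wd i), w01), 0), 0).
apply: pair_ext => //=; apply/rowP => j; rewrite /cover_proj_row !mxE /=.
by case: eqP => [-> | /eqP j_max]; rewrite ?mul1r // wd_inord.
Qed.

Lemma cover_proj_ker z : cover_proj z = 0 <-> center HeisCover z.
Proof.
split=> [/(congr1 fst) /= z_ker | z_center].
  have x0 : z.1.1.1 = 0 by apply/rowP => i; rewrite mxE -cover_proj_row_wd z_ker mxE.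
  have w01 : z.1.1.2 i0 i1 = 0 by rewrite -cover_proj_row_max z_ker mxE.
  move=> h; apply: pair_ext => //=; apply: pair_ext; first apply: pair_ext => //=.
  + by apply/matrixP => i j; rewrite /= x0 !mxE; ring.
  + by apply/rowP => l; rewrite /= x0 !mxE w01; ring.
have br_gen j : cover_br z.1 ((delta_mx 0 j, 0), 0) = 0.
  by have := z_center (((delta_mx 0 j, 0), 0), 0) => /(congr1 fst).
(* bracketing with e_j, j <> i, reads off the coordinate x_i of z *)
have x0 i : z.1.1.1 0 i = 0.
  pose j := if i == i0 then i1 else i0.
  have ij : (i == j) = false by rewrite /j; case: ifP => // /eqP ->.
  have := congr1 (fun v : cover_space => v.1.2 i j) (br_gen j).
  by rewrite /= !mxE !eqxx ij /= mul0r subr0 mulr1.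
have w01 : z.1.1.2 i0 i1 = 0.
  have := congr1 (fun v : cover_space => v.2 0 i0) (br_gen i0).
  rewrite /= !mxE !eqxx /= !x0 !(mul0r, mulr0, mul1r, mulr1, addr0, sub0r).
  by move/eqP; rewrite oppr_eq0 => /eqP.
apply: pair_ext => //=; apply/rowP => j; rewrite /cover_proj_row !mxE.
by case: ifP.
Qed.

Lemma HeisAb_capable : capable HeisAb.
Proof.
exists cover_space, 'rV[F]_0, HeisCover, cover_proj.
by split; [exact: cover_proj_hom | exact: cover_proj_surj | exact: cover_proj_ker].
Qed.

End HeisenbergAbelian.

Section SchurMultiplier.
Variables (F : fieldType) (k : nat).
Hypothesis two_unit : (2 \notin [pchar F])%N.
Local Notation N := k.+2.
Local Notation M := k.+3.
Local Notation FL := (FreeLie F N).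
Local Notation br := (lbr FL).
Local Notation vec := (free_lie F N * 'rV[F]_0)%type.
Local Notation j0 := (i0 k).
Local Notation j1 := (i1 k).
Local Notation zL := (heis_z F k).

Definition gen (i : 'I_N) : vec := (free_gen F i, 0).
Definition gen_img (i : 'I_N) : 'rV[F]_M := delta_mx 0 (wd i).
Definition pres : vec -> 'rV[F]_M * 'rV[F]_0 := free_lift (HeisAb F k) gen_img.
Definition rel (u : vec) : Prop := pres u = 0.
Definition rel_comm : vec -> Prop := brspan FL rel (fun _ => True).
Definition derived : vec -> Prop := brspan FL (fun _ => True) (fun _ => True).
Definition zgen : vec := br (gen j0) (gen j1).

Lemma pres_hom : even_hom FL (HeisAb F k) pres.
Proof. exact: free_lift_hom. Qed.

Lemma rel_subspace : subspace rel.
Proof. exact: (even_hom_ker_subspace pres_hom). Qed.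

Lemma rel_comm_subspace : subspace rel_comm.
Proof. exact/brspan_subspace/(subspaceZ rel_subspace). Qed.

Lemma derived_subspace : subspace derived.
Proof. exact: brspan_subspace. Qed.

Lemma br_anti (x y : vec) : br x y = - br y x.
Proof. exact: lbr_anti_even (thinmx0 _) (thinmx0 _). Qed.

Lemma br_jacobi (x y w : vec) : br x (br y w) + br y (br w x) + br w (br x y) = 0.
Proof. exact: lbr_jacobi_even (thinmx0 _) (thinmx0 _) (thinmx0 _). Qed.

Lemma br_self (x : vec) : br x x = 0.
Proof. exact: lbr_self_even two_unit (thinmx0 _). Qed.

Lemma pres_gen i : pres (gen i) = (gen_img i, 0).
Proof. exact: free_lift_gen. Qed.

Lemma heis_form_gen a b : heis_form (gen_img a) (gen_img b)
  = (a == j0)%:R * (b == j1)%:R - (a == j1)%:R * (b == j0)%:R.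
Proof. by rewrite /heis_form /gen_img !mxE /= !wd_eq ![_ == a]eq_sym ![_ == b]eq_sym. Qed.

Lemma pres_zgen : pres zgen = (zL, 0).
Proof.
rewrite /zgen (even_hom_br pres_hom) !pres_gen; apply: pair_ext => //=.
by rewrite /heis_br heis_form_gen !eqxx mulr1 mulr0 subr0 scale1r.
Qed.

Lemma pres_derived w : derived w -> exists c, pres w = (c *: zL, 0).
Proof.
move=> [m [a [b [_ ->]]]]; apply: HeisAb_derived.
rewrite (even_hom_sum pres_hom).
apply: (subspace_sum (brspan_subspace (fun _ _ _ => I))) => i _.
by rewrite (even_hom_br pres_hom); apply: brspan_br.
Qed.

Lemma derived_sub_zgen w : derived w -> exists c, rel (w - c *: zgen).
Proof.
move=> /pres_derived [c pres_w]; exists c.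
rewrite /rel (even_homB pres_hom) (even_homZ pres_hom) pres_w pres_zgen.
by apply: pair_ext; rewrite /= ?scaler0 subrr.
Qed.

Lemma free_decomp x : addsp (in_span gen) derived x.
Proof.
apply: FreeLie_ind => [i | | u v _ _].
- by apply: addspl derived_subspace _; apply: in_span_gen.
- exact: addsp_subspace (in_span_subspace _) derived_subspace.
- by apply: addspr (in_span_subspace _) _; apply: brspan_br.
Qed.

Lemma rel_comm_pres b : rel_comm b -> pres b = 0.
Proof.
move=> [m [a [c [ac ->]]]]; rewrite (even_hom_sum pres_hom); apply: big1 => i _.
by rewrite (even_hom_br pres_hom); case: (ac i) => -> _; apply: lbr0l.
Qed.

Lemma rel_br_gen a b : ~~ ((a == j0) && (b == j1)) -> ~~ ((a == j1) && (b == j0)) ->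
  rel (br (gen a) (gen b)).
Proof.
move=> ab ba; rewrite /rel (even_hom_br pres_hom) !pres_gen; apply: pair_ext => //=.
rewrite /heis_br heis_form_gen.
by case: (a == j0) (b == j1) (a == j1) (b == j0) ab ba => [] [] [] [] //= _ _;
  rewrite ?mulr0 ?mul0r ?subrr ?scale0r.
Qed.

Lemma rel_br_gen_zgen a : rel (br (gen a) zgen).
Proof.
rewrite /rel (even_hom_br pres_hom) pres_gen pres_zgen; apply: pair_ext => //=.
by rewrite -[zL]scale1r heis_br_z.
Qed.

(* Basis of M(L): the [g_a, g_b] with a < b other than [g_0, g_1], which is
   replaced by [g_0, z] in its slot, and [g_1, z]; here z = [g_0, g_1]. *)
Definition schur_index := option {q : 'I_N * 'I_N | (q.1 < q.2)%N}.

Definition schur_elt (t : schur_index) : vec :=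
  match t with
  | Some q => if val q == (j0, j1) then br (gen j0) zgen
              else br (gen (val q).1) (gen (val q).2)
  | None => br (gen j1) zgen
  end.

Lemma schur_elt_rel t : rel (schur_elt t).
Proof.
case: t => [[[a b] ab]|] /=; last exact: rel_br_gen_zgen.
case: ifP => [_|ab_ne]; first exact: rel_br_gen_zgen.
apply: rel_br_gen; apply/negP => /andP [/eqP a_eq /eqP b_eq].
  by move: ab_ne; rewrite a_eq b_eq eqxx.
by move: ab; rewrite a_eq b_eq.
Qed.

Lemma schur_elt_derived t : derived (schur_elt t).
Proof. by case: t => [q|]; rewrite /schur_elt; [case: ifP => _|]; exact: brspan_br. Qed.

Definition schur_span : vec -> Prop := addsp (in_span schur_elt) rel_comm.
Definition schur_span_z : vec -> Prop := addsp (line zgen) schur_span.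

Lemma schur_span_subspace : subspace schur_span.
Proof. exact: addsp_subspace (in_span_subspace _) rel_comm_subspace. Qed.

Lemma schur_span_z_subspace : subspace schur_span_z.
Proof. exact: addsp_subspace (line_subspace _) schur_span_subspace. Qed.

Lemma schur_span_br_rel r u : rel r -> schur_span (br r u).
Proof. by move=> r_rel; apply: addspr (in_span_subspace _) _; apply: brspan_br. Qed.

Lemma schur_span_br_relr r u : rel r -> schur_span (br u r).
Proof.
move=> r_rel; rewrite br_anti.
by apply: (subspaceN schur_span_subspace); apply: schur_span_br_rel.
Qed.

Lemma schur_span_elt t : schur_span (schur_elt t).
Proof. by apply: addspl rel_comm_subspace _; apply: in_span_gen. Qed.

Lemma schur_span_br_zgen_gen j : schur_span (br zgen (gen j)).
Proof.
rewrite br_anti; apply: (subspaceN schur_span_subspace).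
case: (eqVneq j j0) => [-> | j_ne0].
  exact: (schur_span_elt (Some (exist _ (j0, j1) (erefl true)))).
case: (eqVneq j j1) => [-> | j_ne1]; first exact: (schur_span_elt None).
(* Jacobi: [g_j, z] = -([g_0, [g_1, g_j]] + [g_1, [g_j, g_0]]), both brackets in R *)
have -> : br (gen j) zgen
    = - (br (gen j0) (br (gen j1) (gen j)) + br (gen j1) (br (gen j) (gen j0))).
  by apply/eqP; rewrite -addr_eq0 addrC br_jacobi.
apply: (subspaceN schur_span_subspace); apply: (subspaceD schur_span_subspace);
  apply: schur_span_br_relr; apply: rel_br_gen;
  by rewrite ?eqxx ?(negbTE j_ne0) ?(negbTE j_ne1) ?andbF ?andbT.
Qed.

Lemma schur_span_br_zgen v : schur_span (br zgen v).
Proof.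
have [_ [b [[c ->] b_der ->]]] := free_decomp v.
rewrite lbrDr lbr_sumr; apply: (subspaceD schur_span_subspace).
  apply: (subspace_sum schur_span_subspace) => i _.
  by rewrite lbrZr; apply: (subspaceZ schur_span_subspace); apply: schur_span_br_zgen_gen.
have [c' b_rel] := derived_sub_zgen b_der.
rewrite -[b](subrK (c' *: zgen)) lbrDr lbrZr br_self scaler0 addr0.
exact: schur_span_br_relr.
Qed.

Lemma schur_span_br_derived u v : derived u -> schur_span (br u v).
Proof.
move=> /derived_sub_zgen [c u_rel].
rewrite -[u](subrK (c *: zgen)) lbrDl lbrZl.
apply: (subspaceD schur_span_subspace); first exact: schur_span_br_rel.
exact/(subspaceZ schur_span_subspace)/schur_span_br_zgen.
Qed.

Lemma schur_span_z_br_gen i j : schur_span_z (br (gen i) (gen j)).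
Proof.
have elt_mod (a b : 'I_N) (ab : (a < b)%N) : schur_span_z (br (gen a) (gen b)).
  have := schur_span_elt (Some (exist _ (a, b) ab)); rewrite /schur_elt /=.
  case: ifP => [/eqP [-> ->] _ | _]; last exact: addspr (line_subspace _).
  by apply: addspl schur_span_subspace _; exists 1; rewrite scale1r.
case: (ltngtP i j) => [ij | ji | /val_inj ->]; first exact: elt_mod.
  by rewrite br_anti; apply: (subspaceN schur_span_z_subspace); apply: elt_mod.
by rewrite br_self; apply: (subspace0 schur_span_z_subspace).
Qed.

Lemma schur_span_z_br a b : schur_span_z (br a b).
Proof.
have [_ [a' [[c ->] a'_der ->]]] := free_decomp a.
have [_ [b' [[d ->] b'_der ->]]] := free_decomp b.
have span_sub x : schur_span x -> schur_span_z x by apply: addspr (line_subspace _).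
rewrite lbrDl !lbrDr; do 2 apply: (subspaceD schur_span_z_subspace).
- rewrite lbr_suml; apply: (subspace_sum schur_span_z_subspace) => i _.
  rewrite lbrZl lbr_sumr; apply: (subspaceZ schur_span_z_subspace).
  apply: (subspace_sum schur_span_z_subspace) => j _.
  by rewrite lbrZr; apply: (subspaceZ schur_span_z_subspace); apply: schur_span_z_br_gen.
- by rewrite br_anti; apply/(subspaceN schur_span_z_subspace)/span_sub/schur_span_br_derived.
- exact/span_sub/schur_span_br_derived.
- exact/span_sub/schur_span_br_derived.
Qed.

Lemma rel_derived_schur_span x : rel x -> derived x -> schur_span x.
Proof.
move=> x_rel [m [a [b [_ x_eq]]]].
have : schur_span_z x.
  by rewrite x_eq; apply: (subspace_sum schur_span_z_subspace) => i _; apply: schur_span_z_br.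
move=> [_ [y [[c ->] [s [r [[d ->] r_comm ->]]] x_eq']]].
suff c0 : c = 0.
  rewrite x_eq' c0 scale0r add0r.
  by exists (\sum_t d t *: schur_elt t), r; split=> //; exists d.
have := congr1 (fun w => (pres w).1 0 ord_max) x_eq'.
rewrite x_rel !(even_homD pres_hom) (even_homZ pres_hom) (even_hom_sum pres_hom).
rewrite pres_zgen rel_comm_pres //.
rewrite big1 => [|t _]; last by rewrite (even_homZ pres_hom) schur_elt_rel scaler0.
by rewrite /= !mxE /= eqxx !addr0 mulr1 => /esym.
Qed.

Definition cover_gen (i : 'I_N) : cover_space F k := ((delta_mx 0 i, 0), 0).
Definition cover_lift : vec -> cover_space F k * 'rV[F]_0 :=
  free_lift (HeisCover F k) cover_gen.
Definition cover_zgen : cover_space F k := cover_br (cover_gen j0) (cover_gen j1).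

Lemma cover_lift_hom : even_hom FL (HeisCover F k) cover_lift.
Proof. exact: free_lift_hom. Qed.

Lemma cover_lift_gen i : cover_lift (gen i) = (cover_gen i, 0).
Proof. exact: free_lift_gen. Qed.

Lemma cover_proj_gen i : cover_proj (cover_gen i, 0) = (gen_img i, 0).
Proof.
apply: pair_ext => //=; apply/rowP => j; rewrite /cover_proj_row /gen_img !mxE /=.
case: eqP => [-> | /eqP j_max]; first by rewrite eq_sym wd_max.
by rewrite -(wd_inord j_max) wd_eq wdK.
Qed.

Lemma cover_proj_lift v : cover_proj (cover_lift v) = pres v.
Proof.
move: v; apply: (proj2 (@FreeLie_free F N _ _ (HeisAb F k) gen_img (@no_gen F))
  (@cover_proj F k \o cover_lift) pres) => [||i|[]].
- exact: even_hom_comp cover_lift_hom (cover_proj_hom F k).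
- exact: pres_hom.
- by rewrite /comp [cover_lift _]cover_lift_gen cover_proj_gen [pres _]pres_gen.
Qed.

(* R maps into the centre of the cover, so [R, F] maps to zero. *)
Lemma cover_lift_rel_comm b : rel_comm b -> cover_lift b = 0.
Proof.
move=> [m [a [c [ac ->]]]]; rewrite (even_hom_sum cover_lift_hom); apply: big1 => i _.
rewrite (even_hom_br cover_lift_hom); case: (ac i) => a_rel _.
by apply: (cover_proj_ker (cover_lift (a i))).1; rewrite cover_proj_lift.
Qed.

Lemma cover_lift_zgen : cover_lift zgen = (cover_zgen, 0).
Proof. by rewrite /zgen (even_hom_br cover_lift_hom) !cover_lift_gen. Qed.

Lemma cover_lift_elt t : cover_lift (schur_elt t) =
  match t with
  | Some q => if val q == (j0, j1) then (cover_br (cover_gen j0) cover_zgen, 0)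
              else (cover_br (cover_gen (val q).1) (cover_gen (val q).2), 0)
  | None => (cover_br (cover_gen j1) cover_zgen, 0)
  end.
Proof.
case: t => [q|]; rewrite /schur_elt; [case: ifP => _|];
  by rewrite (even_hom_br cover_lift_hom) ?cover_lift_gen ?cover_lift_zgen.
Qed.

Local Arguments cover_br : simpl never.

Lemma cover_br_gen_wedge a b i j : (cover_br (cover_gen a) (cover_gen b)).1.2 i j
  = (i == a)%:R * (j == b)%:R - (i == b)%:R * (j == a)%:R.
Proof. by rewrite /cover_br /wedge /cover_gen /= !mxE. Qed.

Lemma cover_br_gen_rho a b l : (cover_br (cover_gen a) (cover_gen b)).2 0 l = 0.
Proof. by rewrite /cover_br /rho /cover_gen /= !mxE; ring. Qed.

Lemma cover_br_gen_zgen_wedge a i j : (cover_br (cover_gen a) cover_zgen).1.2 i j = 0.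
Proof. by rewrite /cover_zgen /cover_br /wedge /cover_gen /= !mxE; ring. Qed.

Lemma cover_br_gen_zgen_rho a l : (cover_br (cover_gen a) cover_zgen).2 0 l
  = (a == j0)%:R * (l == j0)%:R + (a == j1)%:R * (l == j1)%:R.
Proof.
rewrite /cover_zgen /cover_br /wedge /rho /cover_gen /= !mxE /=.
by rewrite ![_ == a]eq_sym; ring.
Qed.

Definition schur_coord (t : schur_index) (w : cover_space F k * 'rV[F]_0) : F :=
  match t with
  | Some q => if val q == (j0, j1) then w.1.2 0 j0 else w.1.1.2 (val q).1 (val q).2
  | None => w.1.2 0 j1
  end.

Lemma schur_coord0 t : schur_coord t 0 = 0.
Proof. by case: t => [q|] /=; try case: ifP => _; rewrite !mxE. Qed.

Lemma schur_coordD t a w w' :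
  schur_coord t (a *: w + w') = a * schur_coord t w + schur_coord t w'.
Proof. by case: t => [q|] /=; try case: ifP => _; rewrite !mxE. Qed.

Lemma schur_coord_sum t (c : schur_index -> F)
    (w : schur_index -> cover_space F k * 'rV[F]_0) :
  schur_coord t (\sum_t' c t' *: w t') = \sum_t' c t' * schur_coord t (w t').
Proof.
elim/big_rec2: _ => [|t' y1 y2 _ y_eq]; first exact: schur_coord0.
by rewrite schur_coordD y_eq.
Qed.

Lemma schur_coord_elt t t' : schur_coord t (cover_lift (schur_elt t')) = (t == t')%:R.
Proof.
rewrite cover_lift_elt.
case: t' => [[[a' b'] ab']|] /=; last first.
  case: t => [[[a b] ab]|] /=; last by rewrite cover_br_gen_zgen_rho !eqxx /=; ring.
  by case: ifP => _; rewrite ?cover_br_gen_zgen_rho ?cover_br_gen_zgen_wedge ?eqxx /=; ring.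
case: t => [[[a b] ab]|] /=; last first.
  by case: ifP => _; rewrite ?cover_br_gen_zgen_rho ?cover_br_gen_rho ?eqxx /=; ring.
have -> : (Some (exist (fun q : 'I_N * 'I_N => (q.1 < q.2)%N) (a, b) ab) ==
    Some (exist _ (a', b') ab')) = ((a, b) == (a', b')) by [].
case: ifP => ab01; case: ifP => ab'01.
- by rewrite /= cover_br_gen_zgen_rho (eqP ab01) (eqP ab'01) !eqxx /=; ring.
- rewrite (eqP ab01) eq_sym ab'01 /=.
  by rewrite /cover_br /rho /= !mxE; ring.
- by rewrite /= cover_br_gen_zgen_wedge (eqP ab'01) ab01.
rewrite /= cover_br_gen_wedge.
(* the second product would need a = b' and b = a', contradicting a < b and a' < b' *)
have -> : ((a == b')%:R * (b == a')%:R : F) = 0.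
  case: (eqVneq a b') => [ab'_eq|]; last by rewrite mul0r.
  case: (eqVneq b a') => [ba'_eq|]; last by rewrite mulr0.
  by move: ab ab'; rewrite ab'_eq ba'_eq /= => ba ab; have := ltn_trans ba ab; rewrite ltnn.
rewrite subr0 xpair_eqE.
by case: (a == a'); case: (b == b'); rewrite /= ?mulr1 ?mulr0 ?mul0r.
Qed.

Lemma schur_elt_free (c : schur_index -> F) :
  rel_comm (\sum_t c t *: schur_elt t) -> forall t, c t = 0.
Proof.
move=> /cover_lift_rel_comm; rewrite (even_hom_sum cover_lift_hom).
under eq_bigr do rewrite (even_homZ cover_lift_hom).
move=> sum0 t; have := congr1 (schur_coord t) sum0.
rewrite schur_coord_sum (bigD1 t) //= schur_coord_elt eqxx mulr1 big1 ?addr0.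
  by rewrite schur_coord0.
by move=> t' t't; rewrite schur_coord_elt eq_sym (negbTE t't) mulr0.
Qed.

Lemma pres_surj v : exists u, pres u = v.
Proof.
case: v => u w; rewrite (thinmx0 w).
exists (\sum_i u 0 (wd i) *: gen i + u 0 ord_max *: zgen).
rewrite (even_homD pres_hom) (even_hom_sum pres_hom) (even_homZ pres_hom) pres_zgen.
under eq_bigr do rewrite (even_homZ pres_hom) pres_gen.
apply: pair_ext; last exact: thinmx0.
rewrite /= (raddf_sum fst) /=.
apply/rowP => j; rewrite !mxE summxE /=.
case: (eqVneq j ord_max) => [->|j_max].
  rewrite big1 ?add0r ?eqxx ?mulr1 // => i _.
  by rewrite /gen_img !mxE /= eq_sym wd_max mulr0.
rewrite mulr0 addr0 -(wd_inord j_max) (bigD1 (inord j)) //= big1 ?addr0.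
  by rewrite /gen_img !mxE /= eqxx mulr1.
by move=> i i_ne; rewrite /gen_img !mxE /= wd_eq eq_sym (negbTE i_ne) mulr0.
Qed.

Lemma HeisAb_schur_dim : schur_dim (HeisAb F k) #|{: schur_index}|.
Proof.
exists 'I_N, void, (free_lie F N), 'rV[F]_0, FL, (@free_gen F N), (@no_gen F), pres.
split; [exact: FreeLie_free | exact: pres_hom | exact: pres_surj |].
apply: qdim_basis => [t | a [a_rel a_der] | ]; last exact: schur_elt_free.
  by split; [exact: schur_elt_rel | exact: schur_elt_derived].
have [_ [b [[c ->] b_comm ->]]] := rel_derived_schur_span a_rel a_der.
by exists c; rewrite addrC addKr.
Qed.

End SchurMultiplier.

Lemma HeisAb_corank (F : fieldType) k :
  (2 \notin [pchar F])%N -> has_corank (HeisAb F k) k.+1.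
Proof.
move=> two_unit; exists #|{: schur_index k}|; split; first exact: HeisAb_schur_dim.
rewrite card_option card_sig card_ltn_pairs.
have := bin2_double k.+2; rewrite -mul2n; lia.
Qed.

Section ZeroLie.
Variable F : fieldType.

Definition zero_br (x y : 'rV[F]_0) : 'rV[F]_0 := 0.

Lemma zero_br_linl a x y z : zero_br (a *: x + y) z = a *: zero_br x z + zero_br y z.
Proof. by rewrite /zero_br scaler0 addr0. Qed.

Lemma zero_br_anti x y : zero_br x y = - zero_br y x.
Proof. by rewrite /zero_br oppr0. Qed.

Lemma zero_br_jacobi x y z :
  zero_br x (zero_br y z) + zero_br y (zero_br z x) + zero_br z (zero_br x y) = 0.
Proof. by rewrite /zero_br !addr0. Qed.

Definition ZeroLie : LieSuper 'rV[F]_0 'rV[F]_0 :=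
  EvenLie zero_br_linl zero_br_anti zero_br_jacobi.

Lemma ZeroLie_trivial (v : 'rV[F]_0 * 'rV[F]_0) : v = 0.
Proof. by apply: pair_ext; apply: thinmx0. Qed.

(* The zero algebra is free on the empty set, so it presents itself with R = 0. *)
Lemma ZeroLie_free : is_free ZeroLie (@no_gen F) (@no_gen F).
Proof.
move=> W0 W1 H g0 g1; split.
  exists (fun=> 0); split; [split | by case | by case].
  - by move=> a x y; rewrite scaler0 addr0.
  - by case.
  - by move=> x y; rewrite lbr0l.
move=> f f' f_hom f'_hom _ _ v.
by rewrite (ZeroLie_trivial v) (even_hom0 f_hom) (even_hom0 f'_hom).
Qed.

Lemma ZeroLie_corank : has_corank ZeroLie 0.
Proof.
exists 0%N; split=> //.
exists void, void, 'rV[F]_0, 'rV[F]_0, ZeroLie, (@no_gen F), (@no_gen F), id.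
split; [exact: ZeroLie_free | by [] | by move=> v; exists v |].
exists (fun=> 0); split=> [[] // | a _ | c _ []] //.
exists (fun=> 0); rewrite (ZeroLie_trivial a) big_ord0 subr0.
by apply: subspace0 (brspan_subspace _) => b x ->; rewrite scaler0.
Qed.

Lemma ZeroLie_capable : capable ZeroLie.
Proof.
exists 'rV[F]_0, 'rV[F]_0, ZeroLie, id.
by split=> // [v | z]; [exists v | split=> [_ h | _]; exact: ZeroLie_trivial].
Qed.

Lemma ZeroLie_nilpotent : nilpotent ZeroLie.
Proof. by exists 0%N => x _; exact: ZeroLie_trivial. Qed.

End ZeroLie.

Theorem mainTheorem18 (F : fieldType)
  (h2 : (2 \notin [pchar F])%N) (h3 : (3 \notin [pchar F])%N) (t : nat) :
  exists (m n : nat) (L : LieSuper 'rV[F]_m 'rV[F]_n),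
    [/\ capable L, nilpotent L & has_corank L t].
Proof.
case: t => [|k].
  exists 0%N, 0%N, (ZeroLie F).
  by split; [exact: ZeroLie_capable | exact: ZeroLie_nilpotent | exact: ZeroLie_corank].
exists k.+3, 0%N, (HeisAb F k).
by split; [exact: HeisAb_capable | exact: HeisAb_nilpotent | exact: HeisAb_corank].
Qed.
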